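(* Let $A$ be a local ring with residue field $k$, let $r\ge1$, and let $\phi_1,\ldots,\phi_m:A\to F$ be ring homomorphisms into a field $F$ such that $\prod_{i=1}^m\phi_i(u^r)=1$ for all $u\in A^\times$. Then $k$ is a finite field with $p^f$ elements and $mr=(p-1)t$ for some integer $t\ge f$; in particular $(p-1)f\le mr$. *)

From HB Require Import structures.
From mathcomp Require Import all_boot all_order all_algebra.
Set Implicit Arguments. Unset Strict Implicit. Unset Printing Implicit Defensive.
Import Order.TTheory GRing.Theory Num.Theory.
Local Open Scope ring_scope.

(* A (commutative, nontrivial) ring A is local iff its non-units form an
   ideal, i.e. the sum of two non-units is a non-unit (the unique maximal
   ideal is then the set of non-units). Nontriviality (1 != 0) is built
   into comUnitRingType. *)
Definition local_ring (A : comUnitRingType) : Prop :=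
  forall x y : A, x \isn't a GRing.unit -> y \isn't a GRing.unit ->
    x + y \isn't a GRing.unit.

(* For a local ring A with maximal ideal M (= the non-units), the residue
   field k = A/M has exactly N elements: there is a complete system of N
   pairwise incongruent representatives modulo M. *)
Definition residue_field_card (A : comUnitRingType) (N : nat) : Prop :=
  exists s : seq A,
    [/\ size s = N,
        (forall i j : nat, (i < N)%N -> (j < N)%N ->
            s`_i - s`_j \isn't a GRing.unit -> i = j)
      & (forall a : A, exists2 i : nat, (i < N)%N & a - s`_i \isn't a GRing.unit)].

From HB Require Import structures.
From mathcomp Require Import all_boot all_order all_algebra.
From mathcomp Require Import zify ring.
From Stdlib Require Import Classical.
Set Implicit Arguments. Unset Strict Implicit. Unset Printing Implicit Defensive.
Import Order.TTheory GRing.Theory Num.Theory.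
Local Open Scope ring_scope.

(* Let M be the ideal of non-units of the local ring A and k = A/M.

   1. Either 2 or 3 is a unit of A (their difference is 1), and the hypothesis
      applied to u = n gives n ^ (m r) = 1 in F; hence F has a prime
      characteristic p.  Since every phi i maps units to units and kills p,
      p lies in M, so k has characteristic p and every integer prime to p is
      a unit of A.  Moreover x ^ (m r) = 1 in F for 0 < x < p, which forces
      (p - 1) | m r because X^e - 1 cannot have p - 1 roots for 0 < e < p - 1.
   2. Call a_1, ..., a_n "p-independent" when every combination
      sum c_j a_j with digits 0 <= c_j < p, not all zero, is a unit, i.e.
      when their residues are linearly independent over F_p.  Summing
      prod_(i < m, j < r) phi i (sum c_j a_j) over all digit vectors c gives
      p ^ n - 1 = -1 in F, whereas a Chevalley-Warning argument
      (sum_(x < p) x ^ e = 0 for e < p - 1) shows that such a sum of products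
      of fewer than (p - 1) n affine forms vanishes.  Hence (p - 1) n <= m r.
   3. A p-independent family extends by any element not congruent modulo M to
      one of its combinations, so by 2. some p-independent family b of size f
      spans k; its p ^ f combinations then form a complete system of
      representatives of k, and t = m r / (p - 1) satisfies f <= t. *)

Lemma prod_add_powerset (R : comNzRingType) (I : finType) (D : {set I})
    (U V : I -> R) :
  \prod_(k in D) (U k + V k) =
  \sum_(S in powerset D) (\prod_(k in S) V k) * \prod_(k in D :\: S) U k.
Proof.
rewrite big_mkcond /=.
under eq_bigr => k _ do
  have -> : (if k \in D then U k + V k else 1) =
            (if k \in D then V k else 0) + (if k \in D then U k else 1)
    by case: (k \in D); rewrite ?addr0 ?add0r // addrC.
rewrite bigA_distr (bigID (fun J : {set I} => J \subset D)) /=.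
rewrite [X in _ + X]big1 ?addr0; last first.
  by move=> J /subsetPn [k kJ kD]; rewrite (bigD1 k) //= kJ (negPf kD) mul0r.
apply: eq_big => [J|J JD]; first by rewrite powersetE.
rewrite (big_mkcond (fun k => k \in J)) (big_mkcond (fun k => k \in D :\: J)).
rewrite -big_split /=; apply: eq_bigr => k _; rewrite !inE.
case kJ: (k \in J); first by rewrite (subsetP JD k kJ) /= mulr1.
by rewrite /= mul1r; case: (k \in D).
Qed.

Section PrimeCharacteristic.
Variables (F : fieldType) (p : nat).
Hypothesis pF : p \in [pchar F].

Let p_prime : prime p := pcharf_prime pF.
Let p_gt0 : (0 < p)%N := prime_gt0 p_prime.

Lemma natr_inj_pchar i j : (i < p)%N -> (j < p)%N -> (i%:R : F) = j%:R -> i = j.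
Proof.
wlog ij : i j / (i <= j)%N.
  move=> W ip jp e; case: (leqP i j) => h; first exact: W.
  by symmetry; apply: W => //; apply: ltnW.
move=> ip jp e.
have d : (p %| j - i)%N by rewrite (dvdn_pcharf pF) natrB // e subrr.
case: (posnP (j - i)) => [z|pos]; first lia.
have := dvdn_leq pos d; lia.
Qed.

Lemma natr_fermat x : ~~ (p %| x)%N -> (x%:R : F) ^+ p.-1 = 1.
Proof.
rewrite (dvdn_pcharf pF) => nz.
have e : (x%:R : F) ^+ p = x%:R.
  rewrite -natrX -(GRing.natr_mod_pchar pF) (fermat_little _ p_prime).
  exact: GRing.natr_mod_pchar.
by apply: (mulfI nz); rewrite mulr1 -exprS prednK.
Qed.

(* If x ^ e = 1 for all 0 < x < p, then p - 1 <= e: the nonzero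
   polynomial X^e - 1 would otherwise have too many roots. *)
Lemma exponent_units_bound e : (0 < e)%N ->
  (forall x, (0 < x < p)%N -> (x%:R : F) ^+ e = 1) -> (p.-1 <= e)%N.
Proof.
move=> e0 H.
pose rs := [seq (i.+1)%:R : F | i <- iota 0 p.-1].
have nz : ('X^e - 1%:P : {poly F}) != 0 by rewrite -size_poly_eq0 size_XnsubC.
have succ_lt k : (k < p.-1)%N -> (k.+1 < p)%N by lia.
have hr : all (root ('X^e - 1%:P)) rs.
  apply/allP => z /mapP [i]; rewrite mem_iota add0n => hi ->.
  by rewrite rootE !hornerE H ?subrr //= succ_lt.
have := max_poly_roots nz hr.
rewrite size_XnsubC // size_map size_iota ltnS; apply.
rewrite map_inj_in_uniq ?iota_uniq // => i j; rewrite !mem_iota !add0n.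
by move=> hi hj /(natr_inj_pchar (succ_lt _ hi) (succ_lt _ hj)) [].
Qed.

(* Power sums over the prime field vanish below degree p - 1: pick a with
   a ^ e <> 1 (by the previous lemma); x |-> a x permutes the residues, so the
   sum S satisfies S = a ^ e S. *)
Lemma power_sum_pchar e : (e < p.-1)%N -> \sum_(x <- iota 0 p) (x%:R : F) ^+ e = 0.
Proof.
move=> he; rewrite -(subn0 p) -/(index_iota 0 p) big_mkord.
case: e he => [|e] he.
  by under eq_bigr do rewrite expr0; rewrite sumr_const card_ord (pcharf0 pF).
have [/existsP [a /andP [a0 hae]] | /existsPn H] :=
   boolP [exists a : 'I_p, (0 < a)%N && ((a%:R : F) ^+ e.+1 != 1)]; last first.
  suff : (p.-1 <= e.+1)%N by lia.
  apply: exponent_units_bound => // x /andP [x0 xp].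
  by have := H (Ordinal xp); rewrite /= x0 /= negbK => /eqP.
have anz : (a%:R : F) != 0.
  rewrite -(dvdn_pcharf pF); apply/negP => /(dvdn_leq a0); have := ltn_ord a; lia.
pose h (x : 'I_p) : 'I_p := Ordinal (ltn_pmod (x * a) p_gt0).
have hval x : ((h x : nat)%:R : F) = x%:R * a%:R.
  by rewrite /= (GRing.natr_mod_pchar pF) natrM.
have hinj : injective h.
  move=> x y /(congr1 (fun z : 'I_p => (z : nat)%:R : F)).
  by rewrite !hval => /(mulIf anz) /natr_inj_pchar e'; apply/val_inj/e'.
set S := \sum_(x < p) _.
have : S = a%:R ^+ e.+1 * S.
  rewrite {1}/S (reindex_inj hinj) mulr_sumr; apply: eq_bigr => x _.
  by rewrite hval exprMn mulrC.
move/eqP; rewrite -subr_eq0 -{1}(mul1r S) -mulrBl mulf_eq0 subr_eq0 eq_sym.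
by rewrite (negPf hae) => /eqP.
Qed.

End PrimeCharacteristic.

Section DigitVectors.
Variable p : nat.

Fixpoint grid n : seq (seq nat) :=
  if n is n'.+1 then [seq x :: c | x <- iota 0 p, c <- grid n'] else [:: [::]].

Lemma mem_grid n c : (c \in grid n) = (size c == n) && all (fun x => x < p)%N c.
Proof.
elim: n c => [|n IH] [|x c] //=.
  by apply/negbTE/negP => /allpairsPdep [y [c' [_ _]]].
apply/allpairsPdep/idP => [[y [c' [hy hc' [-> ->]]]]|].
  move: hy hc'; rewrite mem_iota add0n IH => /andP [_ hy] /andP [/eqP hs hc].
  by rewrite /= hs eqxx hy hc.
move=> /andP [hs /andP [hx hc]]; exists x, c; split => //.
  by rewrite mem_iota.
by rewrite IH -(eqn_add2r 1) !addn1 hs.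
Qed.

Lemma size_grid n : size (grid n) = (p ^ n)%N.
Proof. by elim: n => [|n IH] //=; rewrite size_allpairs size_iota IH expnS. Qed.

Lemma grid_uniq n : uniq (grid n).
Proof.
elim: n => [|n IH] //=; apply: allpairs_uniq => //; first exact: iota_uniq.
by move=> [x c] [y d] _ _ /= [-> ->].
Qed.

Lemma sum_grid_succ (R : nmodType) n (g : seq nat -> R) :
  \sum_(c <- grid n.+1) g c = \sum_(x <- iota 0 p) \sum_(c <- grid n) g (x :: c).
Proof. exact: big_allpairs_dep. Qed.

End DigitVectors.

Definition lin (R : nzRingType) (b : seq R) (c : seq nat) : R :=
  \sum_(j < size c) (nth 0%N c j)%:R * b`_j.

Lemma lin_cons (R : nzRingType) (b : seq R) x c :
  lin b (x :: c) = x%:R * b`_0 + lin (behead b) c.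
Proof.
rewrite /lin big_ord_recl /=; congr (_ + _); apply: eq_bigr => j _.
by rewrite /= nth_behead.
Qed.

Lemma lin_map (R S : nzRingType) (f : {rmorphism R -> S}) b c :
  f (lin b c) = lin (map f b) c.
Proof.
rewrite /lin rmorph_sum; apply: eq_bigr => j _; rewrite rmorphM rmorph_nat.
case: (ltnP j (size b)) => h; first by rewrite (nth_map 0).
by rewrite [b`_j]nth_default // [(map f b)`_j]nth_default ?size_map // rmorph0.
Qed.

Section GridSums.
Variables (F : fieldType) (p : nat).
Hypothesis pF : p \in [pchar F].

(* Expanding the product along the first
   coordinate x, each monomial x ^ |S| either has |S| < p - 1, and its sum
   over x vanishes, or leaves fewer than (p - 1)(n - 1) forms in the other
   coordinates. *)
Lemma sum_grid_prod_affine n (I : finType) (D : {set I}) (a : I -> F)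
    (b : I -> seq F) :
  (#|D| < p.-1 * n)%N -> \sum_(c <- grid p n) \prod_(k in D) (a k + lin (b k) c) = 0.
Proof.
elim: n I D a b => [|n IH] I D a b hD; first by rewrite muln0 in hD.
rewrite sum_grid_succ.
have E x c : \prod_(k in D) (a k + lin (b k) (x :: c)) =
   \sum_(S in powerset D) (\prod_(k in S) (x%:R * (b k)`_0)) *
      \prod_(k in D :\: S) (a k + lin (behead (b k)) c).
  rewrite -prod_add_powerset; apply: eq_bigr => k _.
  by rewrite lin_cons addrA addrAC.
under eq_bigr do under eq_bigr do rewrite E.
under eq_bigr do rewrite exchange_big /=.
rewrite exchange_big /= big1 // => S; rewrite powersetE => SD.
under eq_bigr => x _ do rewrite -mulr_sumr big_split /= prodr_const.
rewrite -mulr_suml.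
have [lt|ge] := ltnP #|S| p.-1.
  by rewrite -mulr_suml power_sum_pchar // !mul0r.
rewrite IH ?mulr0 // cardsD (setIidPr SD).
have := subset_leq_card SD; rewrite mulnS in hD; move: hD ge.
by set q := (p.-1 * n)%N; set s := #|S|; set d := #|D|; clearbody q s d; lia.
Qed.

Lemma sum_grid_const n (K : F) : (0 < n)%N -> \sum_(c <- grid p n) K = 0.
Proof.
case: n => // n _; rewrite sum_grid_succ.
under eq_bigr do rewrite -/(\sum_(c <- grid p n) K).
by rewrite -(subn0 p) -/(index_iota 0 p) sumr_const_nat subn0 (mulrn_pchar pF).
Qed.

Lemma sum_grid_indicator0 n : \sum_(c <- grid p n) ((c == nseq n 0%N)%:R : F) = 1.
Proof.
elim: n => [|n IH]; first by rewrite /= big_cons big_nil eqxx addr0.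
rewrite sum_grid_succ.
under eq_bigr => x _ do under eq_bigr => c _ do rewrite /= eqseq_cons -mulnb natrM.
under eq_bigr => x _ do rewrite -mulr_sumr IH mulr1.
case: p (prime_gt0 (pcharf_prime pF)) => // q _.
rewrite /= big_cons eqxx /= big1_seq ?addr0 // => x /andP [_].
by rewrite mem_iota => /andP [h _]; case: x h.
Qed.

End GridSums.

Lemma inv_mod_prime p x : prime p -> ~~ (p %| x)%N -> exists a, (p %| 1 + a * x)%N.
Proof.
move=> pp hx; have [a _ h] := Bezoutl x (prime_gt0 pp).
by exists a; move: h; rewrite (eqP (_ : coprime p x)) // prime_coprime.
Qed.

Lemma grid_sub p n c1 c2 : (0 < p)%N -> c1 \in grid p n -> c2 \in grid p n ->
  c1 != c2 ->
  exists2 d, d \in grid p n & has (fun x => x != 0)%N d /\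
    forall j, (nth 0 d j + nth 0 c2 j = nth 0 c1 j %[mod p])%N.
Proof.
move=> p0; rewrite !mem_grid => /andP [/eqP s1 a1] /andP [/eqP s2 a2] ne.
have digit1 j : (j < n)%N -> (nth 0 c1 j < p)%N.
  by move=> hj; apply: (allP a1); apply: mem_nth; rewrite s1.
have digit2 j : (j < n)%N -> (nth 0 c2 j < p)%N.
  by move=> hj; apply: (allP a2); apply: mem_nth; rewrite s2.
pose d := mkseq (fun k => (nth 0 c1 k + (p - nth 0 c2 k)) %% p)%N n.
have dE j : (nth 0 d j + nth 0 c2 j = nth 0 c1 j %[mod p])%N.
  case: (ltnP j n) => hj; last by rewrite !nth_default ?size_mkseq ?s1 ?s2.
  by rewrite nth_mkseq // modnDml -addnA subnK ?modnDr // ltnW ?digit2.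
exists d.
  rewrite mem_grid size_mkseq eqxx /=; apply/allP => v /mapP [k _ ->].
  exact: ltn_pmod.
split=> //.
have [k hk hne] : exists2 k, (k < n)%N & nth 0 c1 k != nth 0 c2 k.
  case: (boolP [exists k : 'I_n, nth 0 c1 k != nth 0 c2 k]) => [/existsP [k]|].
    by exists k.
  move=> /existsPn H; case/eqP: ne; apply: (eq_from_nth (x0 := 0%N)); first by rewrite s1 s2.
  by move=> k; rewrite s1 => hk; have := H (Ordinal hk); rewrite negbK => /eqP.
apply/hasP; exists (nth 0 d k); first by apply: mem_nth; rewrite size_mkseq.
apply/eqP => d0; case/eqP: hne; have := dE k.
by rewrite d0 add0n !modn_small ?digit1 ?digit2.
Qed.

Section LocalRing.
Variable A : comUnitRingType.
Hypothesis hloc : local_ring A.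

Definition nonunit (x : A) : bool := x \isn't a GRing.unit.

Lemma nonunit0 : nonunit 0. Proof. by rewrite /nonunit unitr0. Qed.
Lemma nonunitD x y : nonunit x -> nonunit y -> nonunit (x + y).
Proof. exact: hloc. Qed.
Lemma nonunitN x : nonunit x -> nonunit (- x).
Proof. by rewrite /nonunit unitrN. Qed.
Lemma nonunitB x y : nonunit x -> nonunit y -> nonunit (x - y).
Proof. by move=> hx hy; apply: nonunitD => //; apply: nonunitN. Qed.
Lemma nonunitMl x y : nonunit x -> nonunit (y * x).
Proof. by rewrite /nonunit unitrM => /negPf ->; rewrite andbF. Qed.
Lemma nonunitMr x y : nonunit x -> nonunit (x * y).
Proof. by rewrite mulrC; apply: nonunitMl. Qed.

(* Since 3 - 2 = 1, the integers 2 and 3 cannot both lie in M. *)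
Lemma local_two_or_three_unit :
  (2%:R : A) \is a GRing.unit \/ (3%:R : A) \is a GRing.unit.
Proof.
case: (boolP ((2%:R : A) \is a GRing.unit)) => h2; [by left | right].
apply/negPn/negP => h3; have := nonunitD h3 (nonunitN h2).
by rewrite -natrB // /nonunit unitr1.
Qed.

Section ResidueCharacteristic.
Variable p : nat.
Hypotheses (p_prime : prime p) (p_nonunit : nonunit p%:R).

Lemma nonunit_natr_dvd k : (p %| k)%N -> nonunit k%:R.
Proof. by move=> /dvdnP [q ->]; rewrite natrM; apply: nonunitMl. Qed.

Lemma nonunit_natrB i j : i = j %[mod p] -> nonunit (i%:R - j%:R).
Proof.
wlog ij : i j / (j <= i)%N.
  move=> W e; case: (leqP j i) => h; first exact: W.
  by rewrite -opprB; apply/nonunitN/W => //; apply: ltnW.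
by move=> e; rewrite -natrB //; apply: nonunit_natr_dvd; rewrite -eqn_mod_dvd // e.
Qed.

Lemma nonunit_sum_congr n (x y : 'I_n -> nat) (w : 'I_n -> A) :
  (forall j, x j = y j %[mod p]) ->
  nonunit (\sum_j (x j)%:R * w j - \sum_j (y j)%:R * w j).
Proof.
move=> h; rewrite -sumrB; apply: (big_ind nonunit) => [|u v|j _].
- exact: nonunit0.
- exact: nonunitD.
- by rewrite -mulrBl; apply/nonunitMr/nonunit_natrB/h.
Qed.

Lemma unit_natr x : ~~ (p %| x)%N -> (x%:R : A) \is a GRing.unit.
Proof.
move=> hx; have [a h] := inv_mod_prime p_prime hx; apply/negPn/negP => hn.
have : nonunit ((1 + a * x)%:R - (a * x)%:R).
  by apply: nonunitB; [apply: nonunit_natr_dvd | rewrite natrM; apply: nonunitMl].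
by rewrite natrD addrK /nonunit unitr1.
Qed.

(* The residues of a are linearly independent over F_p: every combination
   with digits in [0, p), not all zero, is a unit. *)
Definition pindep (a : seq A) : Prop :=
  forall c, c \in grid p (size a) -> has (fun x => x != 0)%N c ->
    lin a c \is a GRing.unit.

(* The residues of b span the residue field over F_p. *)
Definition pspans (b : seq A) : Prop :=
  forall y, exists2 c, c \in grid p (size b) & nonunit (y - lin b c).

(* Adjoining an element y that is not congruent to any combination of a
   preserves independence: if x y + lin a c were in M with 0 < x < p, then
   y would be congruent to the combination with digits -c / x. *)
Lemma pindep_cons a y : pindep a ->
  (forall c, c \in grid p (size a) -> ~~ nonunit (y - lin a c)) -> pindep (y :: a).
Proof.
move=> ha hy [|x c] //; rewrite mem_grid /= eqSS => /andP [hs /andP [hx hc]] hnz.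
have cg : c \in grid p (size a) by rewrite mem_grid hs hc.
rewrite lin_cons /=; case: (posnP x) => [x0|xpos].
  by rewrite x0 mul0r add0r; apply: ha cg _; rewrite x0 in hnz.
apply/negPn/negP => hn.
have hxp : ~~ (p %| x)%N by apply/negP => /(dvdn_leq xpos); lia.
have [a' ha'] := inv_mod_prime p_prime hxp.
pose c' := map (fun v => (a' * v) %% p)%N c.
have c'g : c' \in grid p (size a).
  rewrite mem_grid size_map hs all_map; apply/allP => v _ /=.
  exact: ltn_pmod (prime_gt0 p_prime).
apply: (negP (hy _ c'g)).
have -> : y - lin a c' = ((1 + a' * x)%:R * y - a'%:R * (x%:R * y + lin a c))
    + (a'%:R * lin a c - lin a c') by rewrite natrD natrM; ring.
apply: nonunitD.
  by apply: nonunitB; [apply/nonunitMr/nonunit_natr_dvd | apply: nonunitMl].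
rewrite /lin size_map mulr_sumr; under eq_bigr do rewrite mulrA -natrM.
by apply: nonunit_sum_congr => j; rewrite (nth_map 0%N) // modn_mod.
Qed.

(* Distinct digit vectors give incongruent combinations of an independent
   family: their digit difference would give a unit lying in M. *)
Lemma pindep_lin_inj b c1 c2 : pindep b ->
  c1 \in grid p (size b) -> c2 \in grid p (size b) ->
  nonunit (lin b c1 - lin b c2) -> c1 = c2.
Proof.
move=> hb g1 g2 hn; apply/eqP/negP => /negP ne.
have [d dg [dnz dE]] := grid_sub (prime_gt0 p_prime) g1 g2 ne.
have : nonunit (lin b d + lin b c2 - lin b c1).
  move: (dg) g1 g2; rewrite !mem_grid => /andP [/eqP sd _] /andP [/eqP s1 _].
  move=> /andP [/eqP s2 _]; rewrite /lin sd s1 s2 -big_split /=.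
  under eq_bigr do rewrite -mulrDl -natrD.
  exact: nonunit_sum_congr.
move=> /nonunitD /(_ hn).
have -> : lin b d + lin b c2 - lin b c1 + (lin b c1 - lin b c2) = lin b d by ring.
by rewrite /nonunit hb.
Qed.

Lemma pspans_residue_card b : pindep b -> pspans b ->
  residue_field_card A (p ^ size b)%N.
Proof.
move=> hb hspan; exists (map (lin b) (grid p (size b))); split.
- by rewrite size_map size_grid.
- move=> i j; rewrite -(size_grid p (size b)) => hi hj.
  rewrite !(nth_map [::]) // => hn.
  apply/eqP; rewrite -(nth_uniq [::] hi hj (grid_uniq p (size b))); apply/eqP.
  exact: pindep_lin_inj hb (mem_nth _ hi) (mem_nth _ hj) hn.
- move=> y; have [c cg hc] := hspan y; exists (index c (grid p (size b))).
    by rewrite -(size_grid p (size b)) index_mem.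
  by rewrite (nth_map [::]) ?nth_index // index_mem.
Qed.

End ResidueCharacteristic.
End LocalRing.

Lemma pchar_nonunit (A : comUnitRingType) (F : fieldType) (f : {rmorphism A -> F})
    p : p \in [pchar F] -> nonunit (p%:R : A).
Proof.
move=> pF; apply/negP => /(rmorph_unit f).
by rewrite rmorph_nat (pcharf0 pF) unitr0.
Qed.

Section Main.
Variables (A : comUnitRingType) (F : fieldType) (m r : nat).
Variable phi : 'I_m -> {rmorphism A -> F}.
Hypotheses (hloc : local_ring A) (m_gt0 : (0 < m)%N) (r_gt0 : (1 <= r)%N).
Hypothesis phi_units :
  forall u : A, u \is a GRing.unit -> \prod_(i < m) phi i (u ^+ r) = 1.

Lemma unit_natr_exp n : (n%:R : A) \is a GRing.unit -> (n%:R : F) ^+ (m * r) = 1.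
Proof.
move=> hn; have := phi_units hn; under eq_bigr do rewrite rmorphXn rmorph_nat.
by rewrite prodr_const card_ord -exprM mulnC.
Qed.

(* Some n >= 2 is a unit of A and n ^ (m r) - 1 > 0 vanishes in F. *)
Lemma pchar_exists : exists p, p \in [pchar F].
Proof.
have [n n2 hn] : exists2 n, (1 < n)%N & (n%:R : A) \is a GRing.unit.
  by case: (local_two_or_three_unit hloc) => h; [exists 2%N | exists 3%N].
have h1 : (1 < n ^ (m * r))%N by apply: leq_trans (ltn_expl _ n2); nia.
apply: (natf0_pchar (n := (n ^ (m * r)).-1)); first lia.
by rewrite -subn1 natrB ?natrX ?unit_natr_exp ?subrr //; lia.
Qed.

Lemma prod_phi_lin p (a : seq A) c : pindep p a -> c \in grid p (size a) ->
  \prod_(k : 'I_m * 'I_r) phi k.1 (lin a c) = 1 - (c == nseq (size a) 0%N)%:R.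
Proof.
move=> ha cg; have := cg; rewrite mem_grid => /andP [/eqP sc _].
rewrite -(pair_big xpredT xpredT (fun i (_ : 'I_r) => phi i (lin a c))) /=.
under eq_bigr do rewrite prodr_const card_ord -rmorphXn.
case: (boolP (has (fun x => x != 0)%N c)) => hc.
  rewrite phi_units ?ha //; case: eqP hc => [->|_ _]; last by rewrite subr0.
  by rewrite has_nseq eqxx andbF.
have ec : c = nseq (size a) 0%N.
  by move: hc; rewrite -all_predC -sc => /allP h; apply/all_pred1P/allP => x /h /negPn.
have -> : lin a c = 0.
  by rewrite /lin big1 // => j _; rewrite [c in nth _ c _]ec nth_nseq if_same mul0r.
rewrite ec eqxx subrr; under eq_bigr do rewrite expr0n (gtn_eqF r_gt0) rmorph0.
by rewrite prodr_const card_ord expr0n (gtn_eqF m_gt0).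
Qed.

Section Characteristic.
Variable p : nat.
Hypothesis pF : p \in [pchar F].

Let p_prime : prime p := pcharf_prime pF.
Let pred_p_gt0 : (0 < p.-1)%N.
Proof. by have := prime_gt1 p_prime; lia. Qed.

Let p_nonunit : nonunit (p%:R : A) := pchar_nonunit (phi (Ordinal m_gt0)) pF.

(* Every 0 < x < p satisfies x ^ (m r mod (p - 1)) = 1 in F, by Fermat. *)
Lemma pred_pchar_dvd : (p.-1 %| m * r)%N.
Proof.
have Hx x : (0 < x < p)%N -> (x%:R : F) ^+ (m * r %% p.-1) = 1.
  move=> /andP [x0 xp]; have nd : ~~ (p %| x)%N by apply/negP => /(dvdn_leq x0); lia.
  have := unit_natr_exp (unit_natr hloc p_prime p_nonunit nd).
  rewrite {1}(divn_eq (m * r) p.-1) exprD [(_ %/ _ * _)%N]mulnC exprM.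
  by rewrite (natr_fermat pF nd) expr1n mul1r.
case: (posnP (m * r %% p.-1)) => [z|pos]; first by rewrite /dvdn z.
have := exponent_units_bound pF pos Hx; have := ltn_pmod (m * r) pred_p_gt0; lia.
Qed.

(* Key bound: summing prod_phi_lin over all digit vectors gives -1 in F,
   which by Chevalley-Warning is impossible when m r < (p - 1) |a|. *)
Lemma pindep_bound (a : seq A) : pindep p a -> (p.-1 * size a <= m * r)%N.
Proof.
move=> ha; rewrite leqNgt; apply/negP => hlt.
have := sum_grid_prod_affine pF (D := [set: 'I_m * 'I_r]) (fun _ => 0)
  (fun k => map (phi k.1) a).
rewrite cardsT card_prod !card_ord => /(_ _ hlt).
rewrite (eq_big_seq (fun c => 1 - (c == nseq (size a) 0%N)%:R)); last first.
  move=> c cg; under eq_bigr do rewrite add0r -lin_map.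
  by rewrite -(prod_phi_lin ha cg); apply: eq_bigl => k; rewrite inE.
rewrite sumrB sum_grid_const ?sum_grid_indicator0 // ?sub0r; last first.
  by case: (size a) hlt; rewrite ?muln0.
by move/eqP; rewrite oppr_eq0 oner_eq0.
Qed.

(* Extending independent families one element at a time must stop, since
   their size is bounded by m r; the final family spans. *)
Lemma exists_pspans : exists2 b : seq A, pindep p b & pspans p b.
Proof.
have size_le (a : seq A) : pindep p a -> (size a <= m * r)%N.
  by move/pindep_bound; have := leq_pmull (size a) pred_p_gt0; lia.
have grow (a : seq A) : pindep p a -> pspans p a \/ exists y, pindep p (y :: a).
  move=> ha; case: (classic (pspans p a)) => [|/not_all_ex_not [y hy]]; first by left.
  right; exists y; apply: (pindep_cons hloc p_prime p_nonunit ha) => c cg.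
  by apply/negP => hn; apply: hy; exists c.
suff build k (a : seq A) : pindep p a -> (m * r - size a <= k)%N ->
    exists2 b : seq A, pindep p b & pspans p b.
  apply: (build (m * r) [::] _ (leq_subr _ _)) => c.
  by rewrite mem_grid => /andP [/eqP /size0nil ->].
elim: k a => [|k IH] a ha hk; have [hs|[y hya]] := grow a ha.
- by exists a.
- by have := size_le _ hya; rewrite /=; lia.
- by exists a.
- by apply: (IH _ hya); have := size_le _ hya; rewrite /=; lia.
Qed.

End Characteristic.
End Main.

Unset Implicit Arguments.

Theorem mainTheorem11 (A : comUnitRingType) (F : fieldType) (m r : nat)
  (phi : 'I_m -> {rmorphism A -> F}) :
  local_ring A -> (0 < m)%N -> (1 <= r)%N ->
  (forall u : A, u \is a GRing.unit -> \prod_(i < m) phi i (u ^+ r) = 1) ->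
  exists p f t : nat,
    [/\ prime p, residue_field_card A (p ^ f)%N,
        (m * r = (p - 1) * t)%N, (f <= t)%N & ((p - 1) * f <= m * r)%N].
Proof.
move=> hloc hm hr hyp.
have [p pF] := pchar_exists hloc hm hr hyp.
have p_prime := pcharf_prime pF.
have pred_p_gt0 : (0 < p.-1)%N by have := prime_gt1 p_prime; lia.
have [b hb hspan] := exists_pspans hloc hm hr hyp pF.
have bound := pindep_bound hm hr hyp pF hb.
have dvd := pred_pchar_dvd hloc hm hr hyp pF.
exists p, (size b), (m * r %/ p.-1)%N; rewrite subn1; split => //.
- exact (pspans_residue_card hloc p_prime (pchar_nonunit (phi (Ordinal hm)) pF) hb hspan).
- by rewrite [RHS]mulnC divnK.
- by rewrite -(leq_pmul2l pred_p_gt0) [X in (_ <= X)%N]mulnC divnK.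
Qed.
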